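(* Let $m\geq 1$ and let $h:\mathbb{A}\to{}^m\mathbb{A}$ be an embedding such that $h[\mathbb{A}]$ is a $G_\delta$ subset of ${}^m\mathbb{A}$. Then there exists a pairwise disjoint sequence $J_n$ ($n\in\omega$) of clopen intervals of $\mathbb{A}$ such that $\bigcup_{n\in\omega}J_n$ is dense in $\mathbb{A}$ and for each $n$ there is $j\in m$ such that $J_n$ is $j$-good for $h$.
   Context: Let $\mathbb{A}_0=\,]0,1]\times\{0\}$, $\mathbb{A}_1=[0,1[\,\times\{1\}$ and $\mathbb{A}=\mathbb{A}_0\cup\mathbb{A}_1$, ordered lexicographically: $\langle a,r\rangle\prec\langle b,s\rangle$ iff $a<b$, or $a=b$ and $r<s$; $\mathbb{A}$ (the double arrow space) carries the order topology. ${}^m\mathbb{A}$ is the $m$-th power with the product topology, elements viewed as functions $m=\{0,\dots,m-1\}\to\mathbb{A}$; $\pi_j:{}^m\mathbb{A}\to\mathbb{A}$ is the $j$-th projection and $h_j=\pi_j\circ h$. A clopen interval is a nonempty convex subset of $\mathbb{A}$ that is clopen. A partial function is strictly monotone if it is strictly increasing or strictly decreasing. For $h:\mathbb{A}\to{}^m\mathbb{A}$ and $j_0\in m$, a clopen interval $J$ is $j_0$-good for $h$ if $h_{j_0}\restriction J$ is strictly monotone and $h_j\restriction J$ is constant for every $j\in m\setminus\{j_0\}$. *)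

From Stdlib Require Import Reals.
From mathcomp Require Import ssreflect ssrfun ssrbool eqtype ssrnat fintype.

Set Implicit Arguments.
Unset Strict Implicit.
Unset Printing Implicit Defensive.

Local Open Scope R_scope.

(* The double arrow space: A0 = ]0,1] x {0}, A1 = [0,1[ x {1};
   the second coordinate 0 is encoded as false, 1 as true. *)
Definition in_dbl (p : R * bool) : Prop :=
  if p.2 then 0 <= p.1 < 1 else 0 < p.1 <= 1.

Definition DA := { p : R * bool | in_dbl p }.

Definition DA_lt (x y : DA) : Prop :=
  (proj1_sig x).1 < (proj1_sig y).1 \/
  ((proj1_sig x).1 = (proj1_sig y).1 /\ (proj1_sig x).2 = false /\ (proj1_sig y).2 = true).

Definition DA_le (x y : DA) : Prop := DA_lt x y \/ x = y.

Definition DA_open (U : DA -> Prop) : Prop :=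
  forall x, U x ->
    ((forall y, DA_le x y) \/
       exists a, DA_lt a x /\ forall y, DA_lt a y -> DA_le y x -> U y) /\
    ((forall y, DA_le y x) \/
       exists b, DA_lt x b /\ forall y, DA_le x y -> DA_lt y b -> U y).

Definition prod_open (m : nat) (W : ('I_m -> DA) -> Prop) : Prop :=
  forall f, W f ->
    exists U : 'I_m -> DA -> Prop,
      (forall j, DA_open (U j) /\ U j (f j)) /\
      (forall g, (forall j, U j (g j)) -> W g).

Definition embedding (m : nat) (h : DA -> 'I_m -> DA) : Prop :=
  (forall x y, h x = h y -> x = y) /\
  (forall W, prod_open W -> DA_open (fun x => W (h x))) /\
  (forall U, DA_open U -> exists W, prod_open W /\ forall x, U x <-> W (h x)).

Definition G_delta (m : nat) (S : ('I_m -> DA) -> Prop) : Prop :=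
  exists W : nat -> ('I_m -> DA) -> Prop,
    (forall n, prod_open (W n)) /\ forall f, S f <-> forall n, W n f.

Definition image_of (m : nat) (h : DA -> 'I_m -> DA) : ('I_m -> DA) -> Prop :=
  fun f => exists x, h x = f.

Definition clopen_interval (J : DA -> Prop) : Prop :=
  (exists x, J x) /\
  (forall x y z, J x -> J z -> DA_le x y -> DA_le y z -> J y) /\
  DA_open J /\ DA_open (fun x => ~ J x).

Definition strictly_monotone_on (J : DA -> Prop) (g : DA -> DA) : Prop :=
  (forall x y, J x -> J y -> DA_lt x y -> DA_lt (g x) (g y)) \/
  (forall x y, J x -> J y -> DA_lt x y -> DA_lt (g y) (g x)).

Definition constant_on (J : DA -> Prop) (g : DA -> DA) : Prop :=
  forall x y, J x -> J y -> g x = g y.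

Definition good (m : nat) (h : DA -> 'I_m -> DA) (j0 : 'I_m) (J : DA -> Prop) : Prop :=
  clopen_interval J /\
  strictly_monotone_on J (fun x => h x j0) /\
  (forall j : 'I_m, j <> j0 -> constant_on J (fun x => h x j)).

Definition dense (D : DA -> Prop) : Prop :=
  forall U, DA_open U -> (exists x, U x) -> exists x, U x /\ D x.

(* Each coordinate h_j of h is a continuous self-map of DA.  For such a map f and k : nat,
   consider the set of reals a such that f x >= f <a,1> for every point x lying over
   ]a, a + 1/(k+1)[, and the same set for the reversed order.  If one of these countably many
   sets is dense in a small interval, f is weakly monotone on a clopen segment there; if none
   is, Baire category on [0,1] yields a point a in none of them, which contradicts continuity
   at <a,1> since one of the rays [f <a,1>, ->), (<-, f <a,1>] is open.  Shrinking the segment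
   once per coordinate, every h_j becomes weakly monotone there and either constant or nowhere
   locally constant, and a monotone, nowhere locally constant map separates every pair of twins
   <a,0>, <a,1>.
   Two coordinates j1 <> j2 cannot both separate twins: by Baire category again, for some a the
   point taking its j2-coordinate from h <a,1> and the others from h <a,0> lies in the G_delta set
   h[DA], say it is h w; but w lies on one side of the twins of a, so monotonicity forces h_j1 or
   h_j2 to identify them.  Since h is injective, exactly one coordinate is non-constant on the
   segment, and it is strictly monotone there: the segment is good.  Good segments chosen greedily
   along an enumeration of rational intervals form the required dense disjoint sequence. *)

From Stdlib Require Import Reals ZArith Cantor Lra Lia Classical ClassicalEpsilon ProofIrrelevance.
From Stdlib Require Import FunctionalExtensionality IndefiniteDescription.
From mathcomp Require Import ssreflect ssrfun ssrbool eqtype ssrnat seq fintype.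

Set Implicit Arguments.
Unset Strict Implicit.
Unset Printing Implicit Defensive.

Local Open Scope R_scope.

(** * Points and order of the double arrow space *)

Definition pt (x : DA) : R := (proj1_sig x).1.
Definition side (x : DA) : bool := (proj1_sig x).2.

Lemma DA_ext x y : pt x = pt y -> side x = side y -> x = y.
Proof.
case: x y => [[a s] Hx] [[b t] Hy]; rewrite /pt /side /= => Eab Est.
move: Hx Hy; rewrite Eab Est => Hx Hy.
by rewrite (proof_irrelevance _ Hx Hy).
Qed.

Lemma in_dbl_pt_side x : in_dbl (pt x, side x).
Proof. by case: x => [[a s] H]. Qed.

Lemma pt_bounds x : 0 <= pt x <= 1.
Proof. by have := in_dbl_pt_side x; rewrite /in_dbl /=; case: (side x) => /=; lra. Qed.

Lemma side_pt0 x : pt x = 0 -> side x = true.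
Proof. by have := in_dbl_pt_side x; rewrite /in_dbl /=; case: (side x) => /=; lra. Qed.

Lemma side_pt1 x : pt x = 1 -> side x = false.
Proof. by have := in_dbl_pt_side x; rewrite /in_dbl /=; case: (side x) => /=; lra. Qed.

Lemma DA_ltE x y :
  DA_lt x y <-> pt x < pt y \/ (pt x = pt y /\ side x = false /\ side y = true).
Proof. by []. Qed.

Lemma DA_leE x y :
  DA_le x y <-> pt x < pt y \/ (pt x = pt y /\ (side x = false \/ side y = true)).
Proof.
rewrite /DA_le DA_ltE; split.
- case=> [[|[E [-> _]]]|->]; [by left | by right; split; [|left] |].
  by right; split; [|case: (side y); [right|left]].
- case=> [|[E [Sx|Sy]]]; first by left; left.
  + case Sy: (side y); first by left; right.
    by right; apply: DA_ext; rewrite ?Sx.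
  + case Sx: (side x); last by left; right.
    by right; apply: DA_ext; rewrite ?Sy.
Qed.

Lemma in_dbl01 a s : 0 < a < 1 -> in_dbl (a, s).
Proof. by case: s; rewrite /in_dbl /=; lra. Qed.

Lemma in_dbl_left_end c : 0 <= c < 1 -> in_dbl (c, true).
Proof. by rewrite /in_dbl /=; lra. Qed.

Lemma in_dbl_right_end d : 0 < d <= 1 -> in_dbl (d, false).
Proof. by rewrite /in_dbl /=; lra. Qed.

(* Junk value: [mkDA a s] is the top point <1,0> whenever (a, s) is not a point of DA. *)
Definition mkDA (a : R) (s : bool) : DA :=
  match excluded_middle_informative (in_dbl (a, s)) with
  | left H => exist _ (a, s) H
  | right _ => exist _ (1, false) (in_dbl_right_end (conj Rlt_0_1 (Rle_refl 1)))
  end.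

Lemma pt_mkDA a s : in_dbl (a, s) -> pt (mkDA a s) = a.
Proof. by rewrite /mkDA; case: excluded_middle_informative. Qed.

Lemma side_mkDA a s : in_dbl (a, s) -> side (mkDA a s) = s.
Proof. by rewrite /mkDA; case: excluded_middle_informative. Qed.

Lemma mkDA_pt_side x : mkDA (pt x) (side x) = x.
Proof.
have H := in_dbl_pt_side x.
by apply: DA_ext; rewrite ?pt_mkDA ?side_mkDA.
Qed.

Lemma pt_mkDA01 a s : 0 < a < 1 -> pt (mkDA a s) = a.
Proof. by move=> /(in_dbl01 s) /pt_mkDA. Qed.

Lemma side_mkDA01 a s : 0 < a < 1 -> side (mkDA a s) = s.
Proof. by move=> /(in_dbl01 s) /side_mkDA. Qed.

Lemma DA_lt_irrefl x : ~ DA_lt x x.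
Proof. by move=> /DA_ltE [?|[_ [->]]] //; lra. Qed.

Lemma DA_lt_trans x y z : DA_lt x y -> DA_lt y z -> DA_lt x z.
Proof.
rewrite !DA_ltE => -[?|[? [? S2]]] [?|[? [S3 ?]]]; try (left; lra).
by rewrite S2 in S3.
Qed.

Lemma DA_lt_total x y : DA_lt x y \/ x = y \/ DA_lt y x.
Proof.
rewrite !DA_ltE; case: (total_order_T (pt x) (pt y)) => [[?|E]|?]; try tauto.
case Sx: (side x); case Sy: (side y).
- by right; left; apply: DA_ext; rewrite ?Sx ?Sy.
- by right; right; right.
- by left; right.
- by right; left; apply: DA_ext; rewrite ?Sx ?Sy.
Qed.

Lemma DA_le_refl x : DA_le x x.
Proof. by right. Qed.

Lemma DA_le_pt x y : DA_le x y -> pt x <= pt y.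
Proof. by move=> /DA_leE; lra. Qed.

Lemma DA_le_trans x y z : DA_le x y -> DA_le y z -> DA_le x z.
Proof. by move=> [Hxy|->] [Hyz|<-]; [left; apply: DA_lt_trans Hyz| left | left | right]. Qed.

Lemma DA_lt_le_trans x y z : DA_lt x y -> DA_le y z -> DA_lt x z.
Proof. by move=> Hxy [Hyz|<-] //; apply: DA_lt_trans Hyz. Qed.

Lemma DA_le_lt_trans x y z : DA_le x y -> DA_lt y z -> DA_lt x z.
Proof. by move=> [Hxy|->] Hyz //; apply: DA_lt_trans Hyz. Qed.

Lemma DA_le_antisym x y : DA_le x y -> DA_le y x -> x = y.
Proof.
move=> [Hxy|//] [Hyx|//].
by case: (DA_lt_irrefl (DA_lt_trans Hxy Hyx)).
Qed.

Lemma DA_lt_not_le x y : DA_lt x y -> ~ DA_le y x.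
Proof. by move=> Hxy Hyx; apply: (DA_lt_irrefl (DA_lt_le_trans Hxy Hyx)). Qed.

Lemma DA_not_lt x y : ~ DA_lt x y -> DA_le y x.
Proof. by case: (DA_lt_total x y) => [//|[->|]]; [right|left]. Qed.

Lemma DA_max_or_lt x : (forall y, DA_le y x) \/ exists b, DA_lt x b.
Proof.
case: (classic (exists b, DA_lt x b)) => [|Nb]; [by right | left => y].
by apply: DA_not_lt => Hxy; apply: Nb; exists y.
Qed.

Lemma DA_min_or_gt x : (forall y, DA_le x y) \/ exists a, DA_lt a x.
Proof.
case: (classic (exists a, DA_lt a x)) => [|Na]; [by right | left => y].
by apply: DA_not_lt => Hyx; apply: Na; exists y.
Qed.

Lemma DA_lt_mkDA a b s t : 0 < a < 1 -> 0 < b < 1 -> a < b -> DA_lt (mkDA a s) (mkDA b t).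
Proof. by move=> Ha Hb Hab; rewrite DA_ltE !pt_mkDA01 //; left. Qed.

Lemma twins_lt a : 0 < a < 1 -> DA_lt (mkDA a false) (mkDA a true).
Proof. by move=> Ha; rewrite DA_ltE !pt_mkDA01 // !side_mkDA01 //; right. Qed.

Lemma twins_neq a : 0 < a < 1 -> mkDA a false <> mkDA a true.
Proof. by move=> /twins_lt + E; rewrite E; apply: DA_lt_irrefl. Qed.

Lemma twins_cut a w : 0 < a < 1 -> DA_le w (mkDA a false) \/ DA_le (mkDA a true) w.
Proof.
move=> Ha; rewrite !DA_leE !pt_mkDA01 // !side_mkDA01 //.
case: (total_order_T (pt w) a) => [[?|E]|?]; try tauto.
by case: (side w); [right; right | left; right]; split; auto.
Qed.

(** * Order topology and clopen segments *)

Definition is_left_nbhd (U : DA -> Prop) x :=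
  (forall y, DA_le x y) \/ exists a, DA_lt a x /\ forall y, DA_lt a y -> DA_le y x -> U y.

Definition is_right_nbhd (U : DA -> Prop) x :=
  (forall y, DA_le y x) \/ exists b, DA_lt x b /\ forall y, DA_le x y -> DA_lt y b -> U y.

Lemma is_left_nbhd_sub (U V : DA -> Prop) x :
  (forall y, U y -> V y) -> is_left_nbhd U x -> is_left_nbhd V x.
Proof. by move=> UV [|[a [Ha HU]]]; [left | right; exists a; split; auto]. Qed.

Lemma is_right_nbhd_sub (U V : DA -> Prop) x :
  (forall y, U y -> V y) -> is_right_nbhd U x -> is_right_nbhd V x.
Proof. by move=> UV [|[b [Hb HU]]]; [left | right; exists b; split; auto]. Qed.

Lemma is_left_nbhd_meet (U V : DA -> Prop) x :
  is_left_nbhd U x -> is_left_nbhd V x -> is_left_nbhd (fun y => U y /\ V y) x.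
Proof.
move=> [|[a1 [Ha1 HU]]]; first by left. move=> [|[a2 [Ha2 HV]]]; first by left.
right; case: (DA_lt_total a1 a2) => [lt12|[E|lt21]].
- exists a2; split=> // y Hy Hyx; split; auto; apply: HU Hyx; exact: DA_lt_trans Hy.
- by subst; exists a2; split=> // y Hy Hyx; split; auto.
- exists a1; split=> // y Hy Hyx; split; auto; apply: HV Hyx; exact: DA_lt_trans Hy.
Qed.

Lemma is_right_nbhd_meet (U V : DA -> Prop) x :
  is_right_nbhd U x -> is_right_nbhd V x -> is_right_nbhd (fun y => U y /\ V y) x.
Proof.
move=> [|[b1 [Hb1 HU]]]; first by left. move=> [|[b2 [Hb2 HV]]]; first by left.
right; case: (DA_lt_total b1 b2) => [lt12|[E|lt21]].
- exists b1; split=> // y Hxy Hy; split; auto; apply: HV Hxy _; exact: DA_lt_trans lt12.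
- by subst; exists b2; split=> // y Hxy Hy; split; auto.
- exists b2; split=> // y Hxy Hy; split; auto; apply: HU Hxy _; exact: DA_lt_trans lt21.
Qed.

Lemma DA_open_ext (U V : DA -> Prop) : (forall x, U x <-> V x) -> DA_open U -> DA_open V.
Proof.
move=> UV HU x /UV /HU [HL HR].
by split; [apply: is_left_nbhd_sub HL | apply: is_right_nbhd_sub HR] => y /UV.
Qed.

Lemma DA_open_meet (U V : DA -> Prop) : DA_open U -> DA_open V -> DA_open (fun x => U x /\ V x).
Proof.
move=> HU HV x [/HU [UL UR] /HV [VL VR]].
by split; [apply: is_left_nbhd_meet | apply: is_right_nbhd_meet].
Qed.

Lemma DA_open_join (U V : DA -> Prop) : DA_open U -> DA_open V -> DA_open (fun x => U x \/ V x).
Proof.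
move=> HU HV x [/HU [HL HR] | /HV [HL HR]].
- by split; [apply: is_left_nbhd_sub HL | apply: is_right_nbhd_sub HR]; left.
- by split; [apply: is_left_nbhd_sub HL | apply: is_right_nbhd_sub HR]; right.
Qed.

Lemma DA_open_setT : DA_open (fun _ => True).
Proof.
move=> x _; split.
- by case: (DA_min_or_gt x) => [|[a Ha]]; [left | right; exists a].
- by case: (DA_max_or_lt x) => [|[b Hb]]; [left | right; exists b].
Qed.

Lemma DA_open_gt q : DA_open (fun u => DA_lt q u).
Proof.
move=> x Hqx; split; first by right; exists q.
case: (DA_max_or_lt x) => [|[b Hb]]; [by left | right; exists b; split=> // y Hxy _].
exact: DA_lt_le_trans Hxy.
Qed.

Lemma DA_open_lt q : DA_open (fun u => DA_lt u q).
Proof.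
move=> x Hxq; split; last by right; exists q.
case: (DA_min_or_gt x) => [|[a Ha]]; [by left | right; exists a; split=> // y _ Hyx].
exact: DA_le_lt_trans Hyx _.
Qed.

(* [p, ->) is open because a right twin p = <a,1> is either the least point or has the
   immediate predecessor <a,0>. *)
Lemma DA_open_ge p : side p = true -> DA_open (fun u => DA_le p u).
Proof.
move=> Sp x Hpx; split; last first.
  case: (DA_max_or_lt x) => [|[b Hb]]; [by left | right; exists b; split=> // y Hxy _].
  exact: DA_le_trans Hxy.
case: Hpx => [Hpx|<-]; first by right; exists p; split=> // y Hy _; left.
have [Hp0 Hp1] := pt_bounds p.
case: (Req_dec (pt p) 0) => [E0|N0].
  left=> y; apply/DA_leE; have := pt_bounds y; have := @side_pt0 y.
  case: (Req_dec (pt y) 0) => [->|]; [right; split; [lra | right; auto] | left; lra].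
have Hp : 0 < pt p < 1.
  by case: (Req_dec (pt p) 1) => [/side_pt1|]; [rewrite Sp | lra].
right; exists (mkDA (pt p) false); split.
  by rewrite DA_ltE pt_mkDA01 // side_mkDA01 //; right.
move=> y; rewrite DA_ltE pt_mkDA01 // side_mkDA01 // => Hy /DA_le_pt Hyp.
apply/DA_leE; case: Hy => [|[E [_ Sy]]]; [lra | right; split; auto].
Qed.

Lemma DA_open_le p : side p = false -> DA_open (fun u => DA_le u p).
Proof.
move=> Sp x Hxp; split.
  case: (DA_min_or_gt x) => [|[a Ha]]; [by left | right; exists a; split=> // y _ Hyx].
  exact: DA_le_trans Hxp.
case: Hxp => [Hxp|->]; first by right; exists p; split=> // y _ Hy; left.
have [Hp0 Hp1] := pt_bounds p.
case: (Req_dec (pt p) 1) => [E1|N1].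
  left=> y; apply/DA_leE; have := pt_bounds y; have := @side_pt1 y.
  case: (Req_dec (pt y) 1) => [->|]; [right; split; [lra | left; auto] | left; lra].
have Hp : 0 < pt p < 1.
  by case: (Req_dec (pt p) 0) => [/side_pt0|]; [rewrite Sp | lra].
right; exists (mkDA (pt p) true); split.
  by rewrite DA_ltE pt_mkDA01 // side_mkDA01 //; right.
move=> y /DA_le_pt Hpy; rewrite DA_ltE pt_mkDA01 // side_mkDA01 // => Hy.
apply/DA_leE; case: Hy => [|[E [Sy _]]]; [lra | right; split; auto].
Qed.

Lemma open_right_interval U a : DA_open U -> U (mkDA a true) -> 0 < a < 1 ->
  exists e, a < e /\ forall t s, a < t < e -> t < 1 -> U (mkDA t s).
Proof.
move=> HU /HU [_ [Hmax|[b [Hab Hb]]]] Ha.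
  have /DA_le_pt := Hmax (mkDA ((a + 1) / 2) true).
  by rewrite !pt_mkDA01; lra.
exists (pt b); split.
  by move: Hab; rewrite DA_ltE pt_mkDA01 // side_mkDA01 // => -[|[_ [//]]].
move=> t s Ht Ht1; have Ht01 : 0 < t < 1 by lra.
by apply: Hb; [left | ]; rewrite DA_ltE ?pt_mkDA01 //; left; lra.
Qed.

Lemma open_left_interval U a : DA_open U -> U (mkDA a false) -> 0 < a < 1 ->
  exists e, e < a /\ forall t s, e < t < a -> 0 < t -> U (mkDA t s).
Proof.
move=> HU /HU [[Hmin|[b [Hba Hb]]] _] Ha.
  have /DA_le_pt := Hmin (mkDA (a / 2) true).
  by rewrite !pt_mkDA01; lra.
exists (pt b); split.
  by move: Hba; rewrite DA_ltE pt_mkDA01 // side_mkDA01 // => -[|[_ [_ //]]].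
move=> t s Ht Ht0; have Ht01 : 0 < t < 1 by lra.
by apply: Hb; [| left]; rewrite DA_ltE ?pt_mkDA01 //; left; lra.
Qed.

Lemma open_contains_interval U x : DA_open U -> U x ->
  exists u v, 0 <= u /\ u < v /\ v <= 1 /\ forall t s, u < t < v -> U (mkDA t s).
Proof.
move=> HU Ux; have [Hx0 Hx1] := pt_bounds x; case: (HU x Ux) => HL HR.
case Sx: (side x).
- case: HR => [Hmax|[b [Hxb Hb]]].
    have /DA_le_pt := Hmax (mkDA 1 false).
    rewrite pt_mkDA => [?|]; last by apply: in_dbl_right_end; lra.
    have /side_pt1 : pt x = 1 by lra.
    by rewrite Sx.
  have [Hb0 Hb1] := pt_bounds b.
  have Hxb' : pt x < pt b by move: Hxb; rewrite DA_ltE Sx => -[|[_ [//]]].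
  exists (pt x), (pt b); do 3 (split; first by lra); move=> t s Ht.
  have Ht01 : 0 < t < 1 by lra.
  by apply: Hb; [left | ]; rewrite DA_ltE ?pt_mkDA01 //; left; lra.
- case: HL => [Hmin|[a [Hax Ha]]].
    have /DA_le_pt := Hmin (mkDA 0 true).
    rewrite pt_mkDA => [?|]; last by apply: in_dbl_left_end; lra.
    have /side_pt0 : pt x = 0 by lra.
    by rewrite Sx.
  have [Ha0 Ha1] := pt_bounds a.
  have Hax' : pt a < pt x by move: Hax; rewrite DA_ltE Sx => -[|[_ [_ //]]].
  exists (pt a), (pt x); do 3 (split; first by lra); move=> t s Ht.
  have Ht01 : 0 < t < 1 by lra.
  by apply: Ha; [| left]; rewrite DA_ltE ?pt_mkDA01 //; left; lra.
Qed.

Definition seg (c d : R) : DA -> Prop := fun x =>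
  c < pt x < d \/ (pt x = c /\ side x = true) \/ (pt x = d /\ side x = false).

Lemma segE c d y : 0 <= c < d -> d <= 1 ->
  seg c d y <-> DA_le (mkDA c true) y /\ DA_le y (mkDA d false).
Proof.
move=> Hcd Hd; rewrite !DA_leE pt_mkDA ?side_mkDA ?pt_mkDA ?side_mkDA;
  try (apply: in_dbl_left_end || apply: in_dbl_right_end); try lra.
by rewrite /seg; case: (side y); intuition (try lra; try discriminate).
Qed.

Lemma pt_seg c d x : c < d -> seg c d x -> c <= pt x <= d.
Proof. by rewrite /seg; lra. Qed.

Lemma seg_sub c d c' d' x : c <= c' -> c' < d' -> d' <= d -> seg c' d' x -> seg c d x.
Proof.
rewrite /seg => Hc Hcd Hd.
case: (Req_dec c c') => [<-|]; case: (Req_dec d d') => [<-|]; intuition lra.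
Qed.

Lemma seg_mkDA c d t s : 0 <= c -> d <= 1 -> c < t < d -> seg c d (mkDA t s).
Proof. by move=> Hc Hd Ht; left; rewrite pt_mkDA01; lra. Qed.

Lemma side_seg_left c d y : c < d -> seg c d y -> pt y = c -> side y = true.
Proof. by rewrite /seg; intuition lra. Qed.

Lemma side_seg_right c d y : c < d -> seg c d y -> pt y = d -> side y = false.
Proof. by rewrite /seg; intuition lra. Qed.

Lemma seg_clopen c d : 0 <= c < d -> d <= 1 -> clopen_interval (seg c d).
Proof.
move=> Hcd Hd.
split; [| split; [| split]].
- by exists (mkDA ((c + d) / 2) true); apply: seg_mkDA; lra.
- move=> x y z /(segE _ Hcd Hd) [Hx _] /(segE _ Hcd Hd) [_ Hz] Hxy Hyz.
  by apply/(segE _ Hcd Hd); split; [apply: DA_le_trans Hxy | apply: DA_le_trans Hz].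
- apply: DA_open_ext (fun x => iff_sym (segE x Hcd Hd)) _.
  by apply: DA_open_meet; [apply: DA_open_ge | apply: DA_open_le];
    rewrite side_mkDA //; [apply: in_dbl_left_end | apply: in_dbl_right_end]; lra.
- apply: (@DA_open_ext _ (fun x => ~ seg c d x) _
    (DA_open_join (@DA_open_lt (mkDA c true)) (@DA_open_gt (mkDA d false)))).
  move=> x; rewrite segE //; split.
  + by case=> [lt [lo _] | gt [_ hi]]; [apply: DA_lt_not_le lt lo | apply: DA_lt_not_le gt hi].
  + move=> Nx; apply: NNPP => N; apply: Nx.
    by split; apply: DA_not_lt => H; apply: N; [left | right].
Qed.

(** * Baire category on the reals *)

Lemma nested_intervals_meet (u v : nat -> R) :
  (forall n, u n <= u n.+1) -> (forall n, v n.+1 <= v n) -> (forall n, u n <= v n) ->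
  exists x, forall n, u n <= x <= v n.
Proof.
move=> u_incr v_decr uv.
have mono k n : (k <= n)%N -> u k <= u n /\ v n <= v k.
  elim: n => [|n IH]; first by rewrite leqn0 => /eqP->; lra.
  rewrite leq_eqVlt => /orP [/eqP->|/IH]; first lra.
  by have := u_incr n; have := v_decr n; lra.
have u_le_v k n : u k <= v n.
  have [Hk _] := mono k (maxn k n) (leq_maxl k n).
  have [_ Hn] := mono n (maxn k n) (leq_maxr k n).
  by have := uv (maxn k n); lra.
have bnd : bound (fun y => exists n, y = u n) by exists (v 0%N) => y [n ->].
have [x [ub lub]] := completeness _ bnd (ex_intro _ (u 0%N) (ex_intro _ 0%N erefl)).
exists x => n; split; first by apply: ub; exists n.
by apply: lub => y [k ->]; apply: u_le_v.
Qed.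

Lemma baire_interval (E : nat -> R -> Prop) c d : c < d ->
  (forall r u v, c <= u -> u < v -> v <= d -> exists u' v',
     u <= u' /\ u' < v' /\ v' <= v /\ forall x, u' <= x <= v' -> ~ E r x) ->
  exists x, c <= x <= d /\ forall r, ~ E r x.
Proof.
move=> Hcd avoid.
pose inside (p : R * R) := c <= p.1 /\ p.1 < p.2 /\ p.2 <= d.
pose shrinks r (p q : R * R) :=
  p.1 <= q.1 /\ q.1 < q.2 /\ q.2 <= p.2 /\ forall x, q.1 <= x <= q.2 -> ~ E r x.
have [step Hstep] : exists step : nat * (R * R) -> R * R,
    forall rp, inside rp.2 -> shrinks rp.1 rp.2 (step rp).
  apply: (functional_choice (fun rp q => inside rp.2 -> shrinks rp.1 rp.2 q)) => -[r [u v]].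
  case: (classic (inside (u, v))) => [[/= Hu [Huv Hv]]|out]; last by exists (u, v).
  by have [u' [v' Hq]] := avoid r u v Hu Huv Hv; exists (u', v').
have [I [I0 I_succ]] : exists I : nat -> R * R,
    I 0%N = (c, d) /\ forall n, I n.+1 = step (n, I n).
  by exists (nat_rect (fun _ => (R * R)%type) (c, d) (fun r p => step (r, p))).
have I_inside n : inside (I n).
  elim: n => [|n In]; first by rewrite /inside I0 /=; lra.
  have [Hu [Huv Hv]] := In; have /= [? [? [? _]]] := Hstep (n, I n) In.
  by rewrite /inside I_succ; lra.
have I_step n : shrinks n (I n) (I n.+1) by rewrite I_succ; apply: (Hstep (n, I n) (I_inside n)).
have lo_incr n : (I n).1 <= (I n.+1).1 by have [] := I_step n.
have hi_decr n : (I n.+1).2 <= (I n).2 by have [_ [_ []]] := I_step n.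
have lo_hi n : (I n).1 <= (I n).2 by have [_ [? _]] := I_inside n; lra.
have [x Hx] := nested_intervals_meet lo_incr hi_decr lo_hi.
exists x; split; first by have := Hx 0%N; rewrite I0.
by move=> r; have [_ [_ [_ avoid_r]]] := I_step r; apply: avoid_r; apply: (Hx r.+1).
Qed.

Lemma baire_right_nbhds (Q : nat -> R -> Prop) c d : c < d ->
  (forall n a, c <= a <= d -> exists del, 0 < del /\ forall a', a < a' < a + del -> Q n a') ->
  exists x, c <= x <= d /\ forall n, Q n x.
Proof.
move=> Hcd right_nbhd.
have [x [Hx notE]] : exists x, c <= x <= d /\ forall n, ~ ~ Q n x.
  apply: baire_interval Hcd _ => r u v Hu Huv Hv.
  have [del [Hdel HQ]] := right_nbhd r u (ltac:(lra)).
  pose e := Rmin del (v - u).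
  have [He He'] : 0 < e /\ e <= del /\ e <= v - u.
    by split; [apply: Rmin_glb_lt | split; [apply: Rmin_l | apply: Rmin_r]]; lra.
  exists (u + e / 3), (u + 2 * e / 3); do 3 (split; first by lra).
  by move=> y Hy; apply; apply: HQ; lra.
by exists x; split=> // n; apply: NNPP.
Qed.

(** * Monotone segments of continuous self-maps *)

Definition DA_continuous (f : DA -> DA) :=
  forall U, DA_open U -> DA_open (fun x => U (f x)).

Definition nondecreasing_on (K : DA -> Prop) (f : DA -> DA) :=
  forall x y, K x -> K y -> DA_le x y -> DA_le (f x) (f y).

Definition nonincreasing_on (K : DA -> Prop) (f : DA -> DA) :=
  forall x y, K x -> K y -> DA_le x y -> DA_le (f y) (f x).

Definition monotone_on (K : DA -> Prop) (f : DA -> DA) :=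
  nondecreasing_on K f \/ nonincreasing_on K f.

Lemma DA_continuous_comp f g : DA_continuous f -> DA_continuous g -> DA_continuous (f \o g).
Proof. by move=> Hf Hg U /Hf /Hg. Qed.

Definition DA_rev (x : DA) : DA := mkDA (1 - pt x) (~~ side x).

Lemma in_dbl_rev x : in_dbl (1 - pt x, ~~ side x).
Proof. by have := in_dbl_pt_side x; rewrite /in_dbl /=; case: (side x) => /=; lra. Qed.

Lemma pt_rev x : pt (DA_rev x) = 1 - pt x.
Proof. exact: pt_mkDA (in_dbl_rev x). Qed.

Lemma side_rev x : side (DA_rev x) = ~~ side x.
Proof. exact: side_mkDA (in_dbl_rev x). Qed.

Lemma DA_revK : involutive DA_rev.
Proof. by move=> x; apply: DA_ext; rewrite ?pt_rev ?side_rev ?negbK //; lra. Qed.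

Lemma DA_lt_rev x y : DA_lt (DA_rev x) (DA_rev y) <-> DA_lt y x.
Proof.
rewrite !DA_ltE !pt_rev !side_rev.
by case: (side x); case: (side y); split; intuition (try lra; try discriminate).
Qed.

Lemma DA_le_rev x y : DA_le (DA_rev x) (DA_rev y) <-> DA_le y x.
Proof.
rewrite /DA_le DA_lt_rev; split=> -[lt|E]; [by left | right | by left | right].
- by rewrite -(DA_revK y) -E DA_revK.
- by rewrite E.
Qed.

Lemma is_left_nbhd_rev U x :
  is_right_nbhd U (DA_rev x) -> is_left_nbhd (fun y => U (DA_rev y)) x.
Proof.
case=> [Hmax|[b [Hxb Hb]]]; [left=> y | right; exists (DA_rev b); split].
- by apply/DA_le_rev.
- by apply/DA_lt_rev; rewrite DA_revK.
- by move=> y Hby Hyx; apply: Hb; [apply/DA_le_rev | rewrite -(DA_revK b); apply/DA_lt_rev].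
Qed.

Lemma is_right_nbhd_rev U x :
  is_left_nbhd U (DA_rev x) -> is_right_nbhd (fun y => U (DA_rev y)) x.
Proof.
case=> [Hmin|[a [Hax Ha]]]; [left=> y | right; exists (DA_rev a); split].
- by apply/DA_le_rev.
- by apply/DA_lt_rev; rewrite DA_revK.
- by move=> y Hxy Hya; apply: Ha; [rewrite -(DA_revK a); apply/DA_lt_rev | apply/DA_le_rev].
Qed.

Lemma DA_continuous_rev : DA_continuous DA_rev.
Proof.
move=> U HU x /HU [HL HR].
by split; [apply: is_left_nbhd_rev | apply: is_right_nbhd_rev].
Qed.

Lemma nonincreasing_on_rev K f : nondecreasing_on K (DA_rev \o f) -> nonincreasing_on K f.
Proof. by move=> Hinc x y Kx Ky /(Hinc x y Kx Ky) /DA_le_rev. Qed.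

Lemma nondecreasing_on_rev K f : nonincreasing_on K f -> nondecreasing_on K (DA_rev \o f).
Proof. by move=> Hdec x y Kx Ky /(Hdec x y Kx Ky) /DA_le_rev. Qed.

Lemma right_germ_comparable f a : DA_continuous f -> 0 < a < 1 ->
  exists del, 0 < del /\ a + del <= 1 /\
  ((forall t s, a < t < a + del -> DA_le (f (mkDA a true)) (f (mkDA t s))) \/
   (forall t s, a < t < a + del -> DA_le (f (mkDA t s)) (f (mkDA a true)))).
Proof.
move=> Hf Ha; set p := f (mkDA a true).
have near_a V : DA_open V -> V p ->
    exists del, 0 < del /\ a + del <= 1 /\ forall t s, a < t < a + del -> V (f (mkDA t s)).
  move=> /Hf HV Vp; have [e [Hae He]] := open_right_interval HV Vp Ha.
  exists (Rmin (e - a) (1 - a)); have := Rmin_l (e - a) (1 - a); have := Rmin_r (e - a) (1 - a).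
  by move=> ? ?; split; [apply: Rmin_glb_lt; lra | split=> [|t s Ht]; [|apply: He]; lra].
case Sp: (side p).
- have [del [? [? Hdel]]] := near_a _ (DA_open_ge Sp) (DA_le_refl p).
  by exists del; do 2 (split=> //); left.
- have [del [? [? Hdel]]] := near_a _ (DA_open_le Sp) (DA_le_refl p).
  by exists del; do 2 (split=> //); right.
Qed.

Definition above_right (f : DA -> DA) (k : nat) (a : R) :=
  forall t s, a < t < a + / (INR k + 1) -> t < 1 -> DA_le (f (mkDA a true)) (f (mkDA t s)).

Definition dense_in (P : R -> Prop) (u v : R) :=
  forall p q, u <= p -> p < q -> q <= v -> exists a, p < a < q /\ P a.

Lemma inv_INR_succ_gt0 k : 0 < / (INR k + 1).
Proof. by apply: Rinv_0_lt_compat; have := pos_INR k; lra. Qed.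

Lemma inv_INR_succ_lt del : 0 < del -> exists k, / (INR k + 1) < del.
Proof.
move=> Hdel; have [N [HN N0]] := archimed_cor1 del Hdel; exists N.
apply: Rle_lt_trans HN; apply: Rinv_le_contravar; first exact: lt_0_INR.
by have := pos_INR N; lra.
Qed.

(* If x <= y but f y < f x, continuity at x gives a point a just beside x, still within
   1/(k+1) to the left of y, with f y < f <a,1>, which contradicts [above_right f k a]. *)
Lemma nondecreasing_on_seg f k c d : DA_continuous f -> 0 < c -> c < d -> d < 1 ->
  d - c < / (INR k + 1) -> dense_in (above_right f k) c d -> nondecreasing_on (seg c d) f.
Proof.
move=> Hf Hc Hcd Hd Hlen Hdense x y Hx Hy [Hxy|<-]; last exact: DA_le_refl.
apply: DA_not_lt => Hfyx; have Ho := Hf _ (@DA_open_gt (f y)).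
have Bx := pt_seg Hcd Hx; have By := pt_seg Hcd Hy.
have contra a : above_right f k a -> c < a -> a < pt y -> DA_lt (f y) (f (mkDA a true)) -> False.
  move=> Ha Hca Hay Hfa; have := Ha (pt y) (side y); rewrite mkDA_pt_side => Hle.
  by apply: DA_lt_not_le Hfa (Hle _ _); lra.
move: Hfyx; rewrite -(mkDA_pt_side x); case Sx: (side x) => Hfyx.
- have Hxd : pt x < d by move: Hx; rewrite /seg /= Sx; intuition (try lra; try discriminate).
  have Hxy' : pt x < pt y by move: Hxy; rewrite DA_ltE Sx; intuition discriminate.
  have [e [He Hne]] := open_right_interval Ho Hfyx (ltac:(lra)).
  have [|||a [Ha Ea]] := Hdense (pt x) (Rmin e (pt y)); try lra.
    by apply: Rmin_glb_lt; lra.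
    by have := Rmin_r e (pt y); lra.
  have := Rmin_l e (pt y); have := Rmin_r e (pt y) => ? ?.
  by apply: (contra a Ea); [lra | lra | apply: Hne; lra].
- have Hcx : c < pt x by move: Hx; rewrite /seg /= Sx; intuition (try lra; try discriminate).
  have Hxy' := DA_le_pt (or_introl Hxy).
  have [e [He Hne]] := open_left_interval Ho Hfyx (ltac:(lra)).
  have [|||a [Ha Ea]] := Hdense (Rmax e c) (pt x); try lra.
    exact: Rmax_r.
    by apply: Rmax_lub_lt; lra.
  have := Rmax_l e c; have := Rmax_r e c => ? ?.
  by apply: (contra a Ea); [lra | lra | apply: Hne; lra].
Qed.

Lemma dense_in_sub P u v u' v' : u <= u' -> v' <= v -> dense_in P u v -> dense_in P u' v'.
Proof. by move=> Hu Hv HP p q Hp Hpq Hq; apply: HP; lra. Qed.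

Lemma not_dense_in_avoid P u v : ~ dense_in P u v ->
  exists u' v', u <= u' /\ u' < v' /\ v' <= v /\ forall x, u' <= x <= v' -> ~ P x.
Proof.
move=> ND; apply: NNPP => Nav; apply: ND => p q Hp Hpq Hq; apply: NNPP => NP.
apply: Nav; exists (p + (q - p) / 3), (q - (q - p) / 3); do 3 (split; first by lra).
by move=> x Hx Px; apply: NP; exists x; split=> //; lra.
Qed.

(* Both comparisons of the right germ at once: even indices for f, odd ones for its reversal. *)
Definition above_right_family (f : DA -> DA) (r : nat) : R -> Prop :=
  above_right (if odd r then DA_rev \o f else f) r./2.

Lemma monotone_on_seg_of_dense f r u v : DA_continuous f -> 0 < u -> u < v -> v < 1 ->
  dense_in (above_right_family f r) u v ->
  exists c d, u <= c /\ c < d /\ d <= v /\ monotone_on (seg c d) f.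
Proof.
move=> Hf Hu Huv Hv Hdense; set k := r./2; have Hk := inv_INR_succ_gt0 k.
set d := Rmin v (u + / (INR k + 1) / 2).
have [Hdv Hdk] : d <= v /\ d <= u + / (INR k + 1) / 2 by split; [apply: Rmin_l | apply: Rmin_r].
have Hud : u < d by apply: Rmin_glb_lt; lra.
exists u, d; do 3 (split; first by lra).
have := dense_in_sub (Rle_refl u) Hdv Hdense; rewrite /above_right_family -/k.
case: (odd r) => Hd; [right; apply: nonincreasing_on_rev | left];
  apply: (nondecreasing_on_seg (k := k)) => //; try lra.
exact: DA_continuous_comp DA_continuous_rev Hf.
Qed.

Lemma continuous_monotone_on_subseg f al be : DA_continuous f -> 0 <= al -> al < be -> be <= 1 ->
  exists c d, al <= c /\ c < d /\ d <= be /\ monotone_on (seg c d) f.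
Proof.
move=> Hf Hal Habe Hbe; set c0 := al + (be - al) / 3; set d0 := be - (be - al) / 3.
have [Hc0 [Hcd0 [Hd0 [Halc0 Hd0be]]]] : 0 < c0 /\ c0 < d0 /\ d0 < 1 /\ al <= c0 /\ d0 <= be.
  by rewrite /c0 /d0; lra.
case: (classic (exists r u v, c0 <= u /\ u < v /\ v <= d0 /\
                            dense_in (above_right_family f r) u v)).
  move=> [r [u [v [Hu [Huv [Hv Hdense]]]]]].
  have [Hu0 Hv1] : 0 < u /\ v < 1 by lra.
  have [c [d [Hc [Hcd [Hd Hmono]]]]] := monotone_on_seg_of_dense Hf Hu0 Huv Hv1 Hdense.
  by exists c, d; do 3 (split; first by lra).
move=> Nodense; exfalso.
have [x [Hx Hnone]] : exists x, c0 <= x <= d0 /\ forall r, ~ above_right_family f r x.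
  apply: baire_interval Hcd0 _ => r u v Hu Huv Hv; apply: not_dense_in_avoid => Hdense.
  by apply: Nodense; exists r, u, v.
have [del [Hdel [Hdel1 Hgerm]]] := right_germ_comparable Hf (ltac:(lra) : 0 < x < 1).
have [k Hk] := inv_INR_succ_lt Hdel; have Hk0 := inv_INR_succ_gt0 k.
case: Hgerm => Hgerm.
- apply: (Hnone k.*2); rewrite /above_right_family odd_double doubleK.
  by move=> t s Ht _; apply: Hgerm; lra.
- apply: (Hnone k.*2.+1); rewrite /above_right_family /= odd_double uphalf_double.
  by move=> t s Ht _; apply/DA_le_rev; apply: Hgerm; lra.
Qed.

(** * Coordinates of an embedding *)

Definition nowhere_constant_in (f : DA -> DA) c d :=
  forall c' d', c <= c' -> c' < d' -> d' <= d -> ~ constant_on (seg c' d') f.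

Definition tame_on (f : DA -> DA) c d :=
  monotone_on (seg c d) f /\ (constant_on (seg c d) f \/ nowhere_constant_in f c d).

Lemma monotone_on_subseg f c d c' d' : c <= c' -> c' < d' -> d' <= d ->
  monotone_on (seg c d) f -> monotone_on (seg c' d') f.
Proof.
move=> Hc Hcd Hd [Hm|Hm]; [left | right] => x y Hx Hy;
  by apply: Hm; apply: (seg_sub Hc Hcd Hd).
Qed.

Lemma tame_on_subseg f c d c' d' : c <= c' -> c' < d' -> d' <= d ->
  tame_on f c d -> tame_on f c' d'.
Proof.
move=> Hc Hcd Hd [Hm Hcst]; split; first exact: monotone_on_subseg Hm.
case: Hcst => [Hcst|Hnc]; [left=> x y Hx Hy | right=> c'' d'' ? ? ?].
- by apply: Hcst; apply: (seg_sub Hc Hcd Hd).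
- by apply: Hnc; lra.
Qed.

Lemma tame_subseg (I : finType) (f : I -> DA -> DA) c d :
  (forall i, DA_continuous (f i)) -> 0 < c -> c < d -> d < 1 ->
  exists c' d', c <= c' /\ c' < d' /\ d' <= d /\ forall i, tame_on (f i) c' d'.
Proof.
move=> Hf Hc Hcd Hd.
suff [c' [d' [? [? [? Htame]]]]] : exists c' d', c <= c' /\ c' < d' /\ d' <= d /\
    forall i, i \in enum I -> tame_on (f i) c' d'.
  by exists c', d'; do 3 (split; first by lra); move=> i; apply: Htame; rewrite mem_enum.
elim: (enum I) => [|i s [c1 [d1 [Hc1 [Hcd1 [Hd1 IH]]]]]].
  by exists c, d; do 3 (split; first by lra).
have [c2 [d2 [Hc2 [Hcd2 [Hd2 Hm]]]]] :=
  @continuous_monotone_on_subseg (f i) c1 d1 (Hf i) (ltac:(lra)) Hcd1 (ltac:(lra)).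
have old j : j \in s -> c1 <= c2 -> d2 <= d1 -> tame_on (f j) c2 d2.
  by move=> /IH + ? ?; apply: tame_on_subseg.
case: (classic (exists c3 d3, c2 <= c3 /\ c3 < d3 /\ d3 <= d2 /\ constant_on (seg c3 d3) (f i))).
- move=> [c3 [d3 [Hc3 [Hcd3 [Hd3 Hcst]]]]]; exists c3, d3; do 3 (split; first by lra).
  move=> j; rewrite in_cons => /orP [/eqP->|/old Hj].
  + by split; [exact: monotone_on_subseg Hm | left].
  + by apply: (tame_on_subseg Hc3 Hcd3 Hd3); apply: Hj; lra.
- move=> Nc; exists c2, d2; do 3 (split; first by lra).
  move=> j; rewrite in_cons => /orP [/eqP->|/old Hj]; last by apply: Hj; lra.
  by split=> //; right=> c3 d3 ? ? ? ?; apply: Nc; exists c3, d3.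
Qed.

Lemma nowhere_constant_in_interval f c d u v p : nowhere_constant_in f c d ->
  c <= u -> u < v -> v <= d -> ~ (forall t s, u < t < v -> f (mkDA t s) = p).
Proof.
move=> Hnc Hu Huv Hv Hp; apply: (Hnc (u + (v - u) / 3) (v - (v - u) / 3)); try lra.
have Hlt : u + (v - u) / 3 < v - (v - u) / 3 by lra.
move=> x y /(pt_seg Hlt) Px /(pt_seg Hlt) Py.
by rewrite -(mkDA_pt_side x) -(mkDA_pt_side y) !Hp //; lra.
Qed.

(* If f took the same value p at both twins of a, then, as one of the rays [p, ->) and (<-, p]
   is open, continuity and monotonicity would pin f to p on an interval beside a. *)
Lemma twins_neq_of_nondecreasing f c d a : DA_continuous f -> 0 < c -> d < 1 ->
  nondecreasing_on (seg c d) f -> nowhere_constant_in f c d -> c < a < d ->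
  f (mkDA a false) <> f (mkDA a true).
Proof.
move=> Hf Hc Hd Hinc Hnc Ha E; have Ha1 : 0 < a < 1 by lra.
have inseg t s : c < t < d -> seg c d (mkDA t s) by move=> ?; apply: seg_mkDA; lra.
case Sp: (side (f (mkDA a true))).
- have Ho := Hf _ (DA_open_ge Sp).
  have Ha0 : DA_le (f (mkDA a true)) (f (mkDA a false)) by rewrite E; apply: DA_le_refl.
  have [e [Hea He]] := open_left_interval Ho Ha0 Ha1.
  have [? ?] := (Rmax_l e c, Rmax_r e c).
  apply: (nowhere_constant_in_interval (u := Rmax e c) (v := a) (p := f (mkDA a true)) Hnc);
    [lra | by apply: Rmax_lub_lt; lra | lra |].
  move=> t s Ht; apply: DA_le_antisym; last by apply: He; lra.
  rewrite -E; apply: Hinc; try (apply: inseg; lra).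
  by left; apply: DA_lt_mkDA; lra.
- have Ho := Hf _ (DA_open_le Sp).
  have [e [Hae He]] := open_right_interval Ho (DA_le_refl _) Ha1.
  have [? ?] := (Rmin_l e d, Rmin_r e d).
  apply: (nowhere_constant_in_interval (u := a) (v := Rmin e d) (p := f (mkDA a true)) Hnc);
    [lra | by apply: Rmin_glb_lt; lra | lra |].
  move=> t s Ht; apply: DA_le_antisym; first by apply: He; lra.
  apply: Hinc; try (apply: inseg; lra).
  by left; apply: DA_lt_mkDA; lra.
Qed.

Lemma twins_neq_of_tame f c d a : DA_continuous f -> 0 < c -> d < 1 ->
  monotone_on (seg c d) f -> nowhere_constant_in f c d -> c < a < d ->
  f (mkDA a false) <> f (mkDA a true).
Proof.
move=> Hf Hc Hd [Hinc|Hdec] Hnc Ha; first exact: twins_neq_of_nondecreasing Hinc Hnc Ha.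
move=> E; apply: (twins_neq_of_nondecreasing (f := DA_rev \o f)) Ha _ => //=; last by rewrite E.
- exact: DA_continuous_comp DA_continuous_rev Hf.
- exact: nondecreasing_on_rev.
- move=> c' d' ? ? ? Hcst; apply: (Hnc c' d') => // x y Hx Hy.
  exact: (can_inj DA_revK (Hcst x y Hx Hy)).
Qed.

Section Embedding.

Variables (m : nat) (h : DA -> 'I_m -> DA).
Hypothesis h_cont : forall W, prod_open W -> DA_open (fun x => W (h x)).

Lemma DA_continuous_coord j : DA_continuous (fun x => h x j).
Proof.
move=> U HU; apply: (h_cont (W := fun g => U (g j))) => g Ug.
exists (fun i => if i == j then U else fun _ => True); split.
- by move=> i; case: eqP => [->|_]; split=> //; exact: DA_open_setT.
- by move=> g' /(_ j); rewrite eqxx.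
Qed.

Definition twin_mix (j2 : 'I_m) (a : R) : 'I_m -> DA :=
  fun j => if j == j2 then h (mkDA a true) j else h (mkDA a false) j.

Lemma twin_mix_right_nbhd j2 V a : prod_open V -> V (h (mkDA a true)) -> 0 < a < 1 ->
  exists e, a < e /\ forall a', a < a' < e -> a' < 1 -> V (twin_mix j2 a').
Proof.
move=> HV /HV [U [HU HUV]] Ha.
have Hbox : DA_open (fun x => forall i, U i (h x i)).
  apply: (h_cont (W := fun g => forall i, U i (g i))) => g Ug.
  by exists U; split=> // i; split; [exact: (proj1 (HU i)) | exact: Ug].
have [e [Hae He]] := open_right_interval Hbox (fun i => proj2 (HU i)) Ha.
exists e; split=> // a' Ha' Ha'1; apply: HUV => i; rewrite /twin_mix.
by case: eqP => _; apply: He.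
Qed.

End Embedding.

Lemma twin_mix_in_image m (h : DA -> 'I_m -> DA) j2 c d :
  embedding h -> G_delta (image_of h) -> 0 < c -> c < d -> d < 1 ->
  exists a w, c < a < d /\ seg c d w /\ h w = twin_mix h j2 a.
Proof.
move=> [_ [h_cont h_open]] [Wn [HWn HWnE]] Hc Hcd Hd.
have [_ [_ [Hseg _]]] := seg_clopen (ltac:(lra) : 0 <= c < d) (ltac:(lra) : d <= 1).
have [W [HW HWE]] := h_open _ Hseg.
have [a [Ha Hmix]] : exists a, c + (d - c) / 3 <= a <= d - (d - c) / 3 /\
    forall n, Wn n (twin_mix h j2 a) /\ W (twin_mix h j2 a).
  apply: baire_right_nbhds; first lra.
  move=> n a Ha; have Ha1 : 0 < a < 1 by lra.
  have In : Wn n (h (mkDA a true)) by apply: (proj1 (HWnE _)); exists (mkDA a true).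
  have Iseg : W (h (mkDA a true)) by apply/HWE; apply: seg_mkDA; lra.
  have [e1 [He1 Hn]] := twin_mix_right_nbhd h_cont j2 (HWn n) In Ha1.
  have [e2 [He2 HWe]] := twin_mix_right_nbhd h_cont j2 HW Iseg Ha1.
  set e := Rmin (Rmin e1 e2) d.
  have Hae : a < e by apply: Rmin_glb_lt; [apply: Rmin_glb_lt|]; lra.
  exists (e - a); split=> [|a' Ha']; first lra.
  have : e > a' by lra.
  rewrite !Rmin_Rgt => -[[? ?] ?].
  by split; [apply: Hn | apply: HWe]; lra.
have [w Hw] : image_of h (twin_mix h j2 a) by apply/HWnE => n; have [] := Hmix n.
exists a, w; split; first lra.
by split=> //; apply/HWE; rewrite Hw; have [] := Hmix 0%N.
Qed.

Lemma monotone_on_squeeze K f u v w : monotone_on K f -> K u -> K v -> K w ->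
  DA_le u v -> DA_le v w -> f u = f w -> f u = f v.
Proof.
case=> Hm Ku Kv Kw Huv Hvw E; apply: DA_le_antisym.
- exact: Hm.
- by rewrite E; apply: Hm.
- by rewrite E; apply: Hm.
- exact: Hm.
Qed.

Lemma twin_separating_coords_unique m (h : DA -> 'I_m -> DA) c d (j1 j2 : 'I_m) :
  embedding h -> G_delta (image_of h) -> 0 < c -> c < d -> d < 1 -> j1 <> j2 ->
  monotone_on (seg c d) (fun x => h x j1) -> monotone_on (seg c d) (fun x => h x j2) ->
  (forall a, c < a < d -> h (mkDA a false) j1 <> h (mkDA a true) j1) ->
  (forall a, c < a < d -> h (mkDA a false) j2 <> h (mkDA a true) j2) -> False.
Proof.
move=> Hemb HG Hc Hcd Hd Hj M1 M2 T1 T2.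
have [a [w [Ha [Hw Hhw]]]] := twin_mix_in_image j2 Hemb HG Hc Hcd Hd.
have [B0 B1] : seg c d (mkDA a false) /\ seg c d (mkDA a true) by split; apply: seg_mkDA; lra.
have L01 : DA_le (mkDA a false) (mkDA a true) by left; apply: twins_lt; lra.
have E1 : h w j1 = h (mkDA a false) j1 by rewrite Hhw /twin_mix; case: eqP.
have E2 : h w j2 = h (mkDA a true) j2 by rewrite Hhw /twin_mix eqxx.
case: (twins_cut w (ltac:(lra) : 0 < a < 1)) => Hcut.
- apply: (T2 a Ha); rewrite -E2.
  by symmetry; apply: (monotone_on_squeeze M2 Hw B0 B1 Hcut L01).
- apply: (T1 a Ha).
  by apply: (monotone_on_squeeze M1 B0 B1 Hw L01 Hcut); rewrite E1.
Qed.

Lemma strictly_monotone_of_injective K f : monotone_on K f ->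
  (forall x y, K x -> K y -> f x = f y -> x = y) -> strictly_monotone_on K f.
Proof.
move=> Hm Hinj; have neq x y : K x -> K y -> DA_lt x y -> f x <> f y.
  by move=> Kx Ky Hxy /(Hinj x y Kx Ky) E; rewrite E in Hxy; apply: DA_lt_irrefl Hxy.
case: Hm => Hm; [left | right] => x y Kx Ky Hxy;
  case: (Hm x y Kx Ky (or_introl Hxy)) => // E; exfalso; apply: (neq x y) => //.
Qed.

Lemma good_subseg m (h : DA -> 'I_m -> DA) c d :
  embedding h -> G_delta (image_of h) -> 0 < c -> c < d -> d < 1 ->
  exists c' d', c <= c' /\ c' < d' /\ d' <= d /\ exists j, good h j (seg c' d').
Proof.
move=> Hemb HG Hc Hcd Hd; have [h_inj [h_cont _]] := Hemb.
have [c' [d' [Hc' [Hcd' [Hd' Htame]]]]] :=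
  tame_subseg (DA_continuous_coord h_cont) Hc Hcd Hd.
exists c', d'; do 3 (split; first by lra).
have [Hc'0 Hd'1] : 0 < c' /\ d' < 1 by lra.
have separates j : ~ constant_on (seg c' d') (fun x => h x j) ->
    forall a, c' < a < d' -> h (mkDA a false) j <> h (mkDA a true) j.
  move=> Nc a Ha; have [Hm [//|Hnc]] := Htame j.
  exact: (twins_neq_of_tame (DA_continuous_coord h_cont (j := j)) Hc'0 Hd'1 Hm Hnc Ha).
case: (classic (exists j1, ~ constant_on (seg c' d') (fun x => h x j1))) => [[j1 Nc1]|Ncst].
- have others j : j <> j1 -> constant_on (seg c' d') (fun x => h x j).
    move=> Hj; apply: NNPP => Nc.
    apply: (twin_separating_coords_unique Hemb HG Hc'0 Hcd' Hd'1 (j1 := j1) (j2 := j)).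
    + by move=> E; apply: Hj.
    + exact: (Htame j1).1.
    + exact: (Htame j).1.
    + exact: separates.
    + exact: separates.
  exists j1; split; first by apply: seg_clopen; lra.
  split=> //; apply: strictly_monotone_of_injective (Htame j1).1 _ => x y Hx Hy E.
  apply: h_inj; apply: functional_extensionality => j.
  by case: (classic (j = j1)) => [->|Hj] //; apply: others.
- exfalso; apply: (@twins_neq ((c' + d') / 2)); first lra.
  apply: h_inj; apply: functional_extensionality => j.
  have Cj : constant_on (seg c' d') (fun x => h x j) by apply: NNPP => Nc; apply: Ncst; exists j.
  by apply: Cj; apply: seg_mkDA; lra.
Qed.

(** * A dense disjoint sequence of segments *)

Definition basic_interval (n : nat) : R * R :=
  let: (k, i) := Cantor.of_nat n in
  ((INR i + 1) / (INR k + INR i + 3), (INR i + 2) / (INR k + INR i + 3)).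

Definition proper_interval (p : R * R) := 0 < p.1 /\ p.1 < p.2 /\ p.2 < 1.

Lemma basic_interval_proper n : proper_interval (basic_interval n).
Proof.
rewrite /proper_interval /basic_interval; case: (Cantor.of_nat n) => k i /=.
have := pos_INR k; have := pos_INR i => Hi Hk.
have HD : 0 < INR k + INR i + 3 by lra.
have := Rinv_r _ (Rgt_not_eq _ _ HD); have := Rinv_0_lt_compat _ HD.
rewrite /Rdiv; set t := / _ => Ht Hdt; nra.
Qed.

Lemma basic_interval_dense u v : 0 <= u -> u < v -> v <= 1 ->
  exists n, u < (basic_interval n).1 /\ (basic_interval n).2 < v.
Proof.
move=> Hu Huv Hv; have [N HN] := @inv_INR_succ_lt ((v - u) / 2) (ltac:(lra)).
set D := INR N + 1; have HD : 0 < D by have := pos_INR N; rewrite /D; lra.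
have [Hz1 Hz2] := archimed (u * D); set z := up (u * D) in Hz1 Hz2.
have HuD : 0 <= u * D by apply: Rmult_le_pos; lra.
have [i Hi] : exists i, INR i + 1 = IZR z.
  exists (Z.to_nat z - 1)%coq_nat; have z0 : (0 < z)%Z by apply: lt_0_IZR; lra.
  rewrite minus_INR; last by lia.
  by rewrite INR_IZR_INZ Z2Nat.id /=; [lra | lia].
have Dt := Rinv_r _ (Rgt_not_eq _ _ HD); have t0 := Rinv_0_lt_compat _ HD.
have [Hlo Hhi] : u < (INR i + 1) / D /\ (INR i + 2) / D < v.
  rewrite /Rdiv; move: HN Dt t0; rewrite -/D; set t := / D => HN Dt t0.
  have uDt : u * D * t = u by rewrite Rmult_assoc Dt Rmult_1_r.
  split; first by rewrite Hi -{1}uDt; apply: Rmult_lt_compat_r.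
  have : (INR i + 2) * t <= (u * D + 2) * t by apply: Rmult_le_compat_r; lra.
  by rewrite [(u * D + 2) * t]Rmult_plus_distr_r uDt; lra.
have [k Ek] : exists k, N = Nat.add k i.+2.
  have : (INR i + 2) / D * D < 1 * D by apply: Rmult_lt_compat_r; lra.
  rewrite /Rdiv Rmult_assoc Rinv_l ?Rmult_1_r ?Rmult_1_l => [HiD|]; last lra.
  have : (i.+1 < N)%coq_nat by apply: INR_lt; rewrite S_INR /D in HiD *; lra.
  by move=> ?; exists (Nat.sub N i.+2); lia.
exists (Cantor.to_nat (k, i)); rewrite /basic_interval Cantor.cancel_of_to.
suff -> : INR k + INR i + 3 = D by [].
by rewrite /D Ek plus_INR !S_INR; lra.
Qed.

Definition segp (p : R * R) : DA -> Prop := seg p.1 p.2.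

Definition misses (l : seq (R * R)) (p : R * R) :=
  forall q, List.In q l -> forall y, segp q y -> segp p y -> False.

Definition right_end (l : seq (R * R)) : R := foldr (fun p r => Rmax p.2 r) (1 / 2) l.

Lemma right_end_ge l p : List.In p l -> p.2 <= right_end l.
Proof.
elim: l => [//|q l IH] /= [<-|/IH]; first exact: Rmax_l.
by move=> H; apply: Rle_trans H (Rmax_r _ _).
Qed.

Lemma right_end_bounds l : (forall p, List.In p l -> p.2 < 1) -> 1 / 2 <= right_end l < 1.
Proof.
elim: l => [|q l IH] /= Hl; first lra.
have [IH1 IH2] := IH (fun p Hp => Hl p (or_intror Hp)).
split; first exact: Rle_trans IH1 (Rmax_r _ _).
by apply: Rmax_lub_lt => //; apply: Hl; left.
Qed.

Section GreedySegments.

Variable P : (DA -> Prop) -> Prop.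
Variable pick : R * R -> R * R.
Hypothesis pick_spec : forall c d, 0 < c -> c < d -> d < 1 ->
  c <= (pick (c, d)).1 /\ (pick (c, d)).1 < (pick (c, d)).2 /\ (pick (c, d)).2 <= d /\
  P (segp (pick (c, d))).

(* Inside the n-th basic interval if that interval misses all earlier segments, and to the
   right of all of them otherwise. *)
Definition next_seg (l : seq (R * R)) (n : nat) : R * R :=
  match excluded_middle_informative (misses l (basic_interval n)) with
  | left _ => pick (basic_interval n)
  | right _ => pick (right_end l, (right_end l + 1) / 2)
  end.

Fixpoint chosen (n : nat) : seq (R * R) :=
  if n is n'.+1 then rcons (chosen n') (next_seg (chosen n') n') else [::].

Definition greedy_seg (n : nat) : R * R := next_seg (chosen n) n.

Lemma next_seg_spec l n : (forall p, List.In p l -> proper_interval p) ->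
  proper_interval (next_seg l n) /\ P (segp (next_seg l n)) /\ misses l (next_seg l n).
Proof.
move=> Hl; rewrite /next_seg; case: excluded_middle_informative => [Hmiss|Hmeet].
- have [I1 [I2 I3]] := basic_interval_proper n.
  have := pick_spec I1 I2 I3; rewrite -surjective_pairing => -[A1 [A2 [A3 A4]]].
  split; first by rewrite /proper_interval; lra.
  split=> // q Hq y Hqy Hy; apply: (Hmiss q Hq y Hqy).
  exact: seg_sub A1 A2 A3 Hy.
- have [M1 M2] := right_end_bounds (fun p Hp => proj2 (proj2 (Hl p Hp))).
  have [A1 [A2 [A3 A4]]] := @pick_spec (right_end l) ((right_end l + 1) / 2)
    (ltac:(lra)) (ltac:(lra)) (ltac:(lra)).
  split; first by rewrite /proper_interval; lra.
  split=> // q Hq y Hqy Hy; have [V1 [V2 V3]] := Hl q Hq; have M3 := right_end_ge Hq.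
  have P1 := pt_seg V2 Hqy; have P2 := pt_seg A2 Hy.
  have := side_seg_right V2 Hqy (ltac:(lra)); have := side_seg_left A2 Hy (ltac:(lra)).
  by move=> ->.
Qed.

Lemma In_chosen n p : List.In p (chosen n) <-> exists i, (i < n)%N /\ p = greedy_seg i.
Proof.
elim: n => [|n IH] /=; first by split=> [[]|[i []]].
rewrite -cats1 List.in_app_iff IH /=; split.
- case=> [[i [Hi ->]]|[<-|[]]]; [exists i; split=> // | exists n; split=> //].
  exact: ltnW.
- move=> [i [Hi ->]]; move: Hi; rewrite ltnS leq_eqVlt => /orP [/eqP->|Hi].
  + by right; left.
  + by left; exists i.
Qed.

Lemma chosen_proper n p : List.In p (chosen n) -> proper_interval p.
Proof.
elim: n p => [//|n IH] p /=; rewrite -cats1 List.in_app_iff => -[/IH //|[<-|[]]].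
by have [] := next_seg_spec n IH.
Qed.

Lemma greedy_seg_spec n :
  proper_interval (greedy_seg n) /\ P (segp (greedy_seg n)) /\
  forall i, (i < n)%N -> forall y, segp (greedy_seg i) y -> segp (greedy_seg n) y -> False.
Proof.
have [H1 [H2 H3]] := next_seg_spec n (@chosen_proper n).
by split=> //; split=> // i Hi; apply: H3; apply/In_chosen; exists i.
Qed.

Lemma greedy_seg_basic n :
  (exists y, segp (greedy_seg n) y /\ (basic_interval n).1 <= pt y <= (basic_interval n).2) \/
  exists i, (i < n)%N /\ exists y, segp (greedy_seg i) y /\ segp (basic_interval n) y.
Proof.
rewrite /greedy_seg /next_seg; case: excluded_middle_informative => [Hmiss|Hmeet].
- left; have [I1 [I2 I3]] := basic_interval_proper n.
  have := pick_spec I1 I2 I3; rewrite -surjective_pairing => -[A1 [A2 [A3 _]]].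
  exists (mkDA (((pick (basic_interval n)).1 + (pick (basic_interval n)).2) / 2) true).
  by split; [apply: seg_mkDA | rewrite pt_mkDA01]; lra.
- right; apply: NNPP => Nmeet; apply: Hmeet => q /In_chosen [i [Hi ->]] y Hiy Hy.
  by apply: Nmeet; exists i; split=> //; exists y.
Qed.

End GreedySegments.

Lemma dense_disjoint_segments (P : (DA -> Prop) -> Prop) :
  (forall c d, 0 < c -> c < d -> d < 1 ->
     exists c' d', c <= c' /\ c' < d' /\ d' <= d /\ P (seg c' d')) ->
  exists J : nat -> DA -> Prop,
    (forall n, clopen_interval (J n) /\ P (J n)) /\
    (forall n k, n <> k -> forall x, J n x -> J k x -> False) /\
    dense (fun x => exists n, J n x).
Proof.
move=> Hsub.
pose fits (cd p : R * R) := 0 < cd.1 -> cd.1 < cd.2 -> cd.2 < 1 ->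
  cd.1 <= p.1 /\ p.1 < p.2 /\ p.2 <= cd.2 /\ P (segp p).
have [pick Hpick] : exists pick : R * R -> R * R, forall cd, fits cd (pick cd).
  apply: (functional_choice fits) => -[c d].
  case: (classic (0 < c /\ c < d /\ d < 1)) => [[Hc [Hcd Hd]]|out]; last first.
    by exists (c, d); rewrite /fits /= => Hc Hcd Hd; case: out.
  by have [c' [d' Hcd']] := Hsub c d Hc Hcd Hd; exists (c', d').
have pick_spec c d := Hpick (c, d).
exists (fun n => segp (greedy_seg pick n)); split; [|split].
- move=> n; have [[I1 [I2 I3]] [HP _]] := greedy_seg_spec pick_spec n.
  by split=> //; apply: seg_clopen; lra.
- move=> n k Hnk x Hn Hk; case: (ltngtP n k) => [lt|lt|E]; last by apply: Hnk; apply/eqP; rewrite E.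
  + by have [_ [_ D]] := greedy_seg_spec pick_spec k; apply: (D n lt x Hn Hk).
  + by have [_ [_ D]] := greedy_seg_spec pick_spec n; apply: (D k lt x Hk Hn).
- move=> U HU [x Ux]; have [u [v [Hu [Huv [Hv HUuv]]]]] := open_contains_interval HU Ux.
  have [n [Hlo Hhi]] := basic_interval_dense Hu Huv Hv.
  have [I1 [I2 I3]] := basic_interval_proper n.
  case: (greedy_seg_basic pick_spec n) => [[y [Hy Py]]|[i [Hi [y [Hiy Hy]]]]].
  + by exists y; split; [rewrite -(mkDA_pt_side y); apply: HUuv; lra | exists n].
  + have := pt_seg I2 Hy => Py.
    by exists y; split; [rewrite -(mkDA_pt_side y); apply: HUuv; lra | exists i].
Qed.

Theorem lemma2p5 (m : nat) (h : DA -> 'I_m -> DA) :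
  (1 <= m)%N ->
  embedding h ->
  G_delta (image_of h) ->
  exists J : nat -> DA -> Prop,
    (forall n, clopen_interval (J n)) /\
    (forall n k, n <> k -> forall x, J n x -> J k x -> False) /\
    dense (fun x => exists n, J n x) /\
    (forall n, exists j : 'I_m, good h j (J n)).
Proof.
move=> _ Hemb HG.
have [J [HJ [Hdisj Hdense]]] :=
  dense_disjoint_segments (P := fun K => exists j, good h j K) (fun c d => good_subseg Hemb HG).
exists J; split; first by move=> n; have [] := HJ n.
by split=> //; split=> // n; have [] := HJ n.
Qed.
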